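(* Let $\models$ be an intersective mixed consequence truth-relation on a finite set $V$ of truth values (constant expressive setting). If $\models$ admits a G-negation, then every minimal representation $\models_{\mathcal{D}_p^1,\mathcal{D}_c^1}\cap\dots\cap\models_{\mathcal{D}_p^K,\mathcal{D}_c^K}$ of $\models$ satisfies: (N1) for $i\neq j$ there is no inclusion $\mathcal{D}_p^i\subseteq\mathcal{D}_p^j$ nor $\mathcal{D}_c^i\subseteq\mathcal{D}_c^j$; (N2) for all $i,j$: if $\mathcal{D}_p^i\subseteq\mathcal{D}_c^j$ then $\mathcal{D}_p^j\subseteq\mathcal{D}_c^i$, and if $\mathcal{D}_c^j\subseteq\mathcal{D}_p^i$ then $\mathcal{D}_c^i\subseteq\mathcal{D}_p^j$.
   Context: $V$ contains distinct $1,0$; sets of designated values: $\mathcal{D}\subseteq V$, $1\in\mathcal{D}$, $0\notin\mathcal{D}$. $\gamma\models_{\mathcal{D}_p,\mathcal{D}_c}\delta$ iff ($\gamma\subseteq\mathcal{D}_p\Rightarrow\delta\cap\mathcal{D}_c\neq\emptyset$). An intersective mixed truth-relation is a finite intersection of such; a representation is a list of mixed relations whose intersection it is, minimal if of least possible length. Semantics: valuations mapping atoms to $V$, connectives interpreted by fixed truth functions, extended compositionally, every assignment to finitely many distinct atoms realized; constant expressive: every value is the constant value of some formula. $\Gamma\vdash\Delta$ iff $v(\Gamma)\models v(\Delta)$ for all $v$. A G-negation is a unary connective $\neg$ (interpreted by some truth function) with, for all $\Gamma,\Delta,A$: $\Gamma\cup\{\neg A\}\vdash\Delta$ iff $\Gamma\vdash\{A\}\cup\Delta$;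 and $\Gamma\vdash\{\neg A\}\cup\Delta$ iff $\Gamma\cup\{A\}\vdash\Delta$. *)

From mathcomp Require Import all_boot.
Set Implicit Arguments. Unset Strict Implicit. Unset Printing Implicit Defensive.

Definition designated (V : finType) (one zero : V) (D : {set V}) : bool :=
  (one \in D) && (zero \notin D).

Definition truth_rel (V : finType) := (V -> Prop) -> (V -> Prop) -> Prop.

Definition mixed (V : finType) (Dp Dc : {set V}) : truth_rel V :=
  fun gamma delta =>
    (forall x, gamma x -> x \in Dp) -> exists2 x, delta x & x \in Dc.

Definition represents (V : finType) (one zero : V) (R : truth_rel V)
    (s : seq ({set V} * {set V})) : Prop :=
  (forall p, p \in s -> designated one zero p.1 /\ designated one zero p.2) /\
  (forall gamma delta, R gamma delta <-> (forall p, p \in s -> mixed p.1 p.2 gamma delta)).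

Definition intersective (V : finType) (one zero : V) (R : truth_rel V) : Prop :=
  exists2 s, 0 < size s & represents one zero R s.

Definition minimal_representation (V : finType) (one zero : V) (R : truth_rel V)
    (s : seq ({set V} * {set V})) : Prop :=
  represents one zero R s /\
  (forall s', represents one zero R s' -> size s <= size s').

Inductive form (C : Type) (ar : C -> nat) : Type :=
| Atom : nat -> form ar
| App : forall c : C, ('I_(ar c) -> form ar) -> form ar.

Fixpoint eval (C : Type) (ar : C -> nat) (V : Type)
    (I : forall c : C, ('I_(ar c) -> V) -> V) (v : nat -> V) (f : form ar) : V :=
  match f with
  | Atom n => v n
  | App c args => I c (fun i => eval I v (args i))
  end.

Definition constant_expressive (C : Type) (ar : C -> nat) (V : Type)
    (I : forall c : C, ('I_(ar c) -> V) -> V) : Prop :=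
  forall a : V, exists phi : form ar, forall v : nat -> V, eval I v phi = a.

Definition fset_ (C : Type) (ar : C -> nat) := form ar -> Prop.

Definition img (C : Type) (ar : C -> nat) (V : Type)
    (I : forall c : C, ('I_(ar c) -> V) -> V) (v : nat -> V) (G : fset_ ar) : V -> Prop :=
  fun x => exists2 A, G A & eval I v A = x.

Definition conseq (C : Type) (ar : C -> nat) (V : finType)
    (I : forall c : C, ('I_(ar c) -> V) -> V) (R : truth_rel V)
    (G D : fset_ ar) : Prop :=
  forall v : nat -> V, R (img I v G) (img I v D).

Definition addf (C : Type) (ar : C -> nat) (G : fset_ ar) (A : form ar) : fset_ ar :=
  fun B => G B \/ B = A.

Definition negf (C : Type) (ar : C -> nat) (neg : C) (A : form ar) : form ar :=
  App (fun _ : 'I_(ar neg) => A).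

Definition G_negation (C : Type) (ar : C -> nat) (V : finType)
    (I : forall c : C, ('I_(ar c) -> V) -> V) (R : truth_rel V) (neg : C) : Prop :=
  ar neg = 1 /\
  forall (G D : fset_ ar) (A : form ar),
    (conseq I R (addf G (negf neg A)) D <-> conseq I R G (addf D A)) /\
    (conseq I R G (addf D (negf neg A)) <-> conseq I R (addf G A) D).

(* The countermodels of R, i.e. the pairs (X, Y) of sets of values with X |/= Y,
   are exactly the pairs lying below some (Dp^k, V \ Dc^k); minimality makes these
   K maximal countermodels pairwise incomparable.  A G-negation n moves a value a
   from one side of |= to the other as n(a), so it sends maximal countermodels to
   maximal countermodels; this forces Dp^k = n^-1(V \ Dc^k) and
   V \ Dc^k = n^-1(Dp^k).  (N1) and (N2) are set algebra on these two identities. *)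
From mathcomp Require Import all_boot.
Set Implicit Arguments. Unset Strict Implicit. Unset Printing Implicit Defensive.

Section Representations.
Variables (V : finType) (one zero : V) (R : truth_rel V).
Implicit Types (X Y A B : {set V}) (p q : {set V} * {set V}).
Implicit Type s : seq ({set V} * {set V}).

Definition Rset X Y : Prop := R (fun x => x \in X) (fun y => y \in Y).

Definition refutes X Y p : bool := (X \subset p.1) && (Y \subset ~: p.2).

Definition dominates q p : bool := (p.1 \subset q.1) && (q.2 \subset p.2).

Lemma mixed_dominated p q gamma delta :
  dominates q p -> mixed q.1 q.2 gamma delta -> mixed p.1 p.2 gamma delta.
Proof.
case/andP=> sP sC Hq Hg; have [x dx xC] := Hq (fun x gx => subsetP sP x (Hg x gx)).
by exists x => //; apply: (subsetP sC).
Qed.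

Lemma mixed_setP p X Y :
  mixed p.1 p.2 (fun x => x \in X) (fun y => y \in Y) <-> ~~ refutes X Y p.
Proof.
split=> [Hp | /nandP nref /subsetP sX].
  apply/andP=> -[/subsetP sX /subsetP sY]; have [y yY yC] := Hp sX.
  by move: (sY y yY); rewrite in_setC yC.
case: nref => [/negP // | /subsetPn [y yY]]; rewrite in_setC negbK.
by exists y.
Qed.

Lemma represents_ext s gamma delta gamma' delta' : represents one zero R s ->
  (forall x, gamma x <-> gamma' x) -> (forall y, delta y <-> delta' y) ->
  R gamma delta -> R gamma' delta'.
Proof.
move=> [_ Rs] eg ed /Rs Hs; apply/Rs => p ps Hg.
have [y dy yC] := Hs p ps (fun x gx => Hg x ((eg x).1 gx)).
by exists y => //; apply/ed.
Qed.

Lemma represents_dominated s s' : represents one zero R s -> {subset s' <= s} ->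
  (forall p, p \in s -> exists2 q, q \in s' & dominates q p) ->
  represents one zero R s'.
Proof.
move=> [Ds Rs] ss' dom; split=> [p /ss' /Ds // | gamma delta].
split=> [/Rs Hs q /ss' /Hs // | Hs']; apply/Rs => p /dom [q qs' dqp].
exact: mixed_dominated dqp (Hs' q qs').
Qed.

Lemma not_RsetP s X Y : represents one zero R s -> ~ Rset X Y <-> has (refutes X Y) s.
Proof.
move=> [_ Rs]; split=> [nR | /hasP [p ps ref] /Rs Hs].
  apply/negPn/negP=> /hasPn nref; apply/nR/Rs => p ps; exact/mixed_setP/nref.
by have /mixed_setP := Hs p ps; rewrite ref.
Qed.

Section Minimal.
Variable s : seq ({set V} * {set V}).
Hypothesis Hmin : minimal_representation one zero R s.

Lemma minimal_uniq : uniq s.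
Proof.
apply/negPn; rewrite -ltn_size_undup -leqNgt; apply: Hmin.2.
apply: represents_dominated Hmin.1 _ _ => [p | p ps]; first by rewrite mem_undup.
by exists p; rewrite ?mem_undup // /dominates !subxx.
Qed.

Lemma minimal_dominates p q : p \in s -> q \in s -> dominates q p -> p = q.
Proof.
move=> ps qs dqp; apply/eqP/negPn/negP=> npq.
have rem_mem r : r \in rem p s = (r != p) && (r \in s).
  by rewrite (mem_rem_uniq _ minimal_uniq) inE.
have Rrem : represents one zero R (rem p s).
  apply: represents_dominated Hmin.1 (@mem_rem _ p s) _ => r rs.
  have [-> | nrp] := eqVneq r p; first by exists q; rewrite // rem_mem eq_sym npq.
  by exists r; rewrite ?rem_mem ?nrp // /dominates !subxx.
have := Hmin.2 _ Rrem; rewrite size_rem // leqNgt ltn_predL.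
by case: s ps.
Qed.

Lemma minimal_refutes_extend p A B : p \in s ->
  ~ Rset (A :|: p.1) (B :|: ~: p.2) <-> refutes A B p.
Proof.
move=> ps; split=> [/(not_RsetP _ _ Hmin.1) /hasP [q qs] | /andP [sA sB]].
  rewrite /refutes !subUset => /andP [/andP [sAq sPq] /andP [sBq sCq]].
  rewrite setCS in sCq.
  by rewrite (minimal_dominates ps qs) ?sAq ?sBq //; apply/andP.
apply/(not_RsetP _ _ Hmin.1)/hasP.
by exists p; rewrite // /refutes !subUset sA sB !subxx.
Qed.

Section Negation.
Variables (C : Type) (ar : C -> nat) (I : forall c : C, ('I_(ar c) -> V) -> V).
Hypothesis Hce : constant_expressive I.
Variable neg : C.
Hypothesis Hneg : G_negation I R neg.

Definition negv (a : V) : V := @I neg (fun _ => a).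

Definition const_forms X : fset_ ar :=
  fun phi => exists2 b, b \in X & forall v, eval I v phi = b.

Lemma img_const_forms X v x : img I v (const_forms X) x <-> x \in X.
Proof.
split=> [[phi [b bX Hb] <-] | xX]; first by rewrite Hb.
by have [phi Hphi] := Hce x; exists phi => //; exists x.
Qed.

Lemma img_addf_const X phi b : (forall v, eval I v phi = b) ->
  forall v x, img I v (addf (const_forms X) phi) x <-> x \in b |: X.
Proof.
move=> Hphi v x; split.
  case=> psi [Xpsi | ->] <-; apply/setU1P; last by left.
  by right; apply/(img_const_forms X v); exists psi.
case/setU1P=> [-> | /(img_const_forms X v x).2 [psi Xpsi <-]].
  by exists phi; first right.
by exists psi; first left.
Qed.

Lemma conseq_Rset G D X Y :
  (forall v x, img I v G x <-> x \in X) -> (forall v y, img I v D y <-> y \in Y) ->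
  conseq I R G D <-> Rset X Y.
Proof.
move=> hG hD; split=> [/(_ (fun=> one)) | HR v]; apply: (represents_ext Hmin.1).
- exact: hG.
- exact: hD.
- by move=> x; apply: iff_sym (hG v x).
- by move=> y; apply: iff_sym (hD v y).
- exact: HR.
Qed.

Lemma eval_negf_const phi a : (forall v, eval I v phi = a) ->
  forall v, eval I v (negf neg phi) = negv a.
Proof. by move=> Hphi v; rewrite /= Hphi. Qed.

Lemma Rset_negL a X Y : Rset (negv a |: X) Y <-> Rset X (a |: Y).
Proof.
have [phi Hphi] := Hce a; have [negL _] := Hneg.2 (const_forms X) (const_forms Y) phi.
move: negL (conseq_Rset (img_addf_const X (eval_negf_const Hphi)) (@img_const_forms Y)).
by move: (conseq_Rset (@img_const_forms X) (img_addf_const Y Hphi)); tauto.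
Qed.

Lemma Rset_negR a X Y : Rset X (negv a |: Y) <-> Rset (a |: X) Y.
Proof.
have [phi Hphi] := Hce a; have [_ negR] := Hneg.2 (const_forms X) (const_forms Y) phi.
move: negR (conseq_Rset (@img_const_forms X) (img_addf_const Y (eval_negf_const Hphi))).
by move: (conseq_Rset (img_addf_const X Hphi) (@img_const_forms Y)); tauto.
Qed.

Lemma minimal_premise_negv p : p \in s -> p.1 = negv @^-1: (~: p.2).
Proof.
move=> ps; apply/setP=> x; rewrite !inE.
have Ex := minimal_refutes_extend [set x] set0 ps.
have Enx := minimal_refutes_extend set0 [set negv x] ps.
rewrite /refutes sub1set sub0set andbT set0U in Ex.
rewrite /refutes sub1set sub0set set0U in_setC /= in Enx.
have negR := Rset_negR x p.1 (~: p.2).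
by apply/idP/idP; tauto.
Qed.

Lemma minimal_conclusion_negv p : p \in s -> ~: p.2 = negv @^-1: p.1.
Proof.
move=> ps; apply/setP=> y; rewrite !inE.
have Ey := minimal_refutes_extend set0 [set y] ps.
have Eny := minimal_refutes_extend [set negv y] set0 ps.
rewrite /refutes sub1set sub0set set0U in_setC /= in Ey.
rewrite /refutes sub1set sub0set andbT set0U in Eny.
have negL := Rset_negL y p.1 (~: p.2).
by apply/idP/idP; tauto.
Qed.

Lemma minimal_premise_sub p q : p \in s -> q \in s -> p.1 \subset q.1 -> p = q.
Proof.
move=> ps qs sP; apply: minimal_dominates => //; rewrite /dominates sP -setCS.
by rewrite (minimal_conclusion_negv ps) (minimal_conclusion_negv qs) preimsetS.
Qed.

Lemma minimal_conclusion_sub p q : p \in s -> q \in s -> p.2 \subset q.2 -> p = q.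
Proof.
move=> ps qs sC; apply/esym/minimal_dominates => //; rewrite /dominates sC andbT.
by rewrite (minimal_premise_negv ps) (minimal_premise_negv qs) preimsetS ?setCS.
Qed.

Lemma minimal_premise_conclusion p q : p \in s -> q \in s ->
  p.1 \subset q.2 -> q.1 \subset p.2.
Proof.
move=> ps qs sPC; rewrite (minimal_premise_negv qs) -[p.2]setCK.
by rewrite (minimal_conclusion_negv ps) -preimsetC preimsetS ?setCS.
Qed.

Lemma minimal_conclusion_premise p q : p \in s -> q \in s ->
  q.2 \subset p.1 -> p.2 \subset q.1.
Proof.
move=> ps qs sCP; rewrite -setCS (minimal_conclusion_negv ps).
by rewrite (minimal_premise_negv qs) -preimsetC setCK preimsetS.
Qed.

End Negation.
End Minimal.
End Representations.

Theorem theorem7p8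
  (V : finType) (one zero : V) (Hoz : one != zero)
  (R : truth_rel V) (HR : intersective one zero R)
  (C : Type) (ar : C -> nat) (I : forall c : C, ('I_(ar c) -> V) -> V)
  (Hce : constant_expressive I)
  (neg : C) (Hneg : G_negation I R neg)
  (s : seq ({set V} * {set V})) (Hmin : minimal_representation one zero R s) :
  (forall i j : nat, i < size s -> j < size s -> i != j ->
     ~~ ((nth (set0, set0) s i).1 \subset (nth (set0, set0) s j).1) /\
     ~~ ((nth (set0, set0) s i).2 \subset (nth (set0, set0) s j).2)) /\
  (forall i j : nat, i < size s -> j < size s ->
     (((nth (set0, set0) s i).1 \subset (nth (set0, set0) s j).2) ->
        ((nth (set0, set0) s j).1 \subset (nth (set0, set0) s i).2)) /\
     (((nth (set0, set0) s j).2 \subset (nth (set0, set0) s i).1) ->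
        ((nth (set0, set0) s i).2 \subset (nth (set0, set0) s j).1))).
Proof.
split=> [i j ilt jlt | i j ilt jlt].
  rewrite -(nth_uniq (set0, set0) ilt jlt (minimal_uniq Hmin)) => nij.
  split; apply: contra nij => sub; apply/eqP.
  - by apply: (minimal_premise_sub Hmin Hce Hneg); rewrite ?mem_nth.
  - by apply: (minimal_conclusion_sub Hmin Hce Hneg); rewrite ?mem_nth.
split.
- by apply: (minimal_premise_conclusion Hmin Hce Hneg); rewrite ?mem_nth.
- by apply: (minimal_conclusion_premise Hmin Hce Hneg); rewrite ?mem_nth.
Qed.
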